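(* Let $\mathbf L$ be a locally compact non-discrete non-Archimedean field and let $\tilde\Gamma_{\mathbf L}=\{|x|_{\mathbf L}:x\in\mathbf L\}\subset[0,\infty)$. For every ultrametric space $(X,\rho)$ there exists an ultrametric $\rho'$ on $X$ equivalent to $\rho$ such that $\rho'(X,X)\subset\tilde\Gamma_{\mathbf L}$.
   Context: An ultrametric is a metric satisfying $\rho(x,y)\le\max(\rho(x,z),\rho(z,y))$. *)

From Stdlib Require Import Reals List.
From mathcomp Require Import all_boot all_algebra.
Set Implicit Arguments.
Unset Strict Implicit.
Open Scope R_scope.

Section Metric.
Variable X : Type.

Record is_ultrametric (d : X -> X -> R) : Prop := {
  um_nonneg : forall x y, 0 <= d x y;
  um_eq0 : forall x y, d x y = 0 <-> x = y;
  um_sym : forall x y, d x y = d y x;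
  um_ultra : forall x y z, d x y <= Rmax (d x z) (d z y)
}.

Definition open_in (d : X -> X -> R) (U : X -> Prop) : Prop :=
  forall x, U x -> exists e, 0 < e /\ forall y, d x y < e -> U y.

Definition equiv_metric (d d' : X -> X -> R) : Prop :=
  forall U : X -> Prop, open_in d U <-> open_in d' U.

Definition compact_in (d : X -> X -> R) (A : X -> Prop) : Prop :=
  forall (I : Type) (U : I -> X -> Prop),
    (forall i, open_in d (U i)) ->
    (forall x, A x -> exists i, U i x) ->
    exists s : list I, forall x, A x -> exists i, In i s /\ U i x.

Definition locally_compact (d : X -> X -> R) : Prop :=
  forall x, exists V C : X -> Prop,
    open_in d V /\ V x /\ (forall y, V y -> C y) /\ compact_in d C.

Definition discrete_top (d : X -> X -> R) : Prop :=
  forall x, open_in d (fun y => y = x).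
End Metric.

Record is_nonarch_abs (K : fieldType) (a : K -> R) : Prop := {
  abs_nonneg : forall x, 0 <= a x;
  abs_eq0 : forall x, a x = 0 <-> x = GRing.zero;
  abs_mul : forall x y, a (GRing.mul x y) = a x * a y;
  abs_ultra : forall x y, a (GRing.add x y) <= Rmax (a x) (a y)
}.

Definition abs_dist (K : fieldType) (a : K -> R) : K -> K -> R :=
  fun x y => a (GRing.add x (GRing.opp y)).

Definition lc_nondiscrete_nonarch_field (K : fieldType) (a : K -> R) : Prop :=
  is_nonarch_abs a /\ locally_compact (abs_dist a) /\ ~ discrete_top (abs_dist a).

Definition value_set (K : fieldType) (a : K -> R) : R -> Prop :=
  fun r => exists x : K, a x = r.

(* Pick pi in L with 0 < |pi| < 1 (it exists because L is not discrete) and put q = |pi|;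
   every q^k, k in Z, is the value |pi^k|.  The map f sending 0 to 0 and r > 0 to the least
   power of q that is >= r is nondecreasing and satisfies r <= f r < r / q.  Hence f o rho is
   again an ultrametric, uniformly equivalent to rho, with values in the value set of L. *)
From Stdlib Require Import Reals Lra Lia Classical.
From mathcomp Require Import all_boot all_algebra.
Import GRing.Theory.
Set Implicit Arguments.
Open Scope R_scope.

Section MetricTransform.
Variable X : Type.

Lemma ultrametric_comp (d : X -> X -> R) (f : R -> R) :
  is_ultrametric d -> f 0 = 0 -> (forall r, 0 < r -> 0 < f r) ->
  (forall a b, 0 <= a -> a <= b -> f a <= f b) ->
  is_ultrametric (fun x y => f (d x y)).
Proof.
move=> [d_ge0 d_eq0 d_sym d_ultra] f0 f_gt0 f_mono.
have f_ge0 r : 0 <= r -> 0 <= f r.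
  by move=> r_ge0; rewrite -f0; apply: f_mono => //; apply: Rle_refl.
split=> [x y | x y | x y | x y z].
- exact: f_ge0.
- split=> [fd0 | <-]; last by rewrite (proj2 (d_eq0 x x) erefl).
  apply/d_eq0; case: (d_ge0 x y) => [d_gt0 | //].
  by have := f_gt0 _ d_gt0; lra.
- by rewrite d_sym.
- apply: (Rle_trans _ _ _ (f_mono _ _ (d_ge0 x y) (d_ultra x y z))).
  apply: (Rmax_case (d x z) (d z y) (fun m => f m <= _)).
  + exact: Rmax_l.
  + exact: Rmax_r.
Qed.

Definition unif_cont_id (d d' : X -> X -> R) : Prop :=
  forall e, 0 < e -> exists delta, 0 < delta /\ forall x y, d x y < delta -> d' x y < e.

Lemma open_in_unif_cont_id (d d' : X -> X -> R) (U : X -> Prop) :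
  unif_cont_id d d' -> open_in d' U -> open_in d U.
Proof.
move=> dd' U_open x Ux.
have [e [e_gt0 ball_e]] := U_open x Ux.
have [delta [delta_gt0 small]] := dd' e e_gt0.
by exists delta; split=> // y dxy; apply/ball_e/small.
Qed.

Lemma equiv_metric_unif_cont (d d' : X -> X -> R) :
  unif_cont_id d d' -> unif_cont_id d' d -> equiv_metric d d'.
Proof. by move=> dd' d'd U; split; apply: open_in_unif_cont_id. Qed.

Lemma equiv_metric_comp (d : X -> X -> R) (f : R -> R) (c : R) :
  (forall x y, 0 <= d x y) -> 0 < c ->
  (forall r, 0 <= r -> r <= f r /\ c * f r <= r) ->
  equiv_metric d (fun x y => f (d x y)).
Proof.
move=> d_ge0 c_gt0 f_bounds; apply: equiv_metric_unif_cont => e e_gt0.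
- exists (c * e); split; first nra.
  move=> x y dxy; have [_ cf_le] := f_bounds _ (d_ge0 x y); nra.
- exists e; split=> // x y fdxy; have [f_ge _] := f_bounds _ (d_ge0 x y); lra.
Qed.

End MetricTransform.

Section CeilPow.
Variable q : R.
Hypotheses (q_gt0 : 0 < q) (q_lt1 : q < 1).

Definition ceil_pow_exp (r : R) : Z := Int_part (ln r / ln q).

(* The least integer power of q that is >= r; junk value 0 for r <= 0. *)
Definition ceil_pow (r : R) : R :=
  if Rle_dec r 0 then 0 else Rpower q (IZR (ceil_pow_exp r)).

Lemma ln_q_lt0 : ln q < 0.
Proof. by rewrite -ln_1; apply: ln_increasing. Qed.

Lemma Rpower_lt_iff (r x : R) : 0 < r -> Rpower q x < r <-> ln r / ln q < x.
Proof.
move=> r_gt0; have lnq := ln_q_lt0.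
have -> : ln r / ln q < x <-> x * ln q < ln r.
  have ln_r : ln r = ln r / ln q * ln q by field; lra.
  by split=> ?; nra.
split=> [lt_r | lt_lnr].
- by rewrite -(ln_Rpower q x); apply: ln_increasing => //; apply: exp_pos.
- by rewrite -(exp_ln r r_gt0); apply: exp_increasing.
Qed.

Lemma Rpower_q_antimono (x y : R) : x <= y -> Rpower q y <= Rpower q x.
Proof.
move=> le_xy; have lnq := ln_q_lt0.
apply: Rnot_lt_le; rewrite Rpower_lt_iff; last exact: exp_pos.
have -> : ln (Rpower q y) / ln q = y by rewrite ln_Rpower; field; lra.
lra.
Qed.

Lemma ceil_pow_le0 (r : R) : r <= 0 -> ceil_pow r = 0.
Proof. by rewrite /ceil_pow; case: Rle_dec. Qed.

Lemma ceil_pow_gt0E (r : R) : 0 < r -> ceil_pow r = Rpower q (IZR (ceil_pow_exp r)).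
Proof. by rewrite /ceil_pow; case: Rle_dec => // r_le0; lra. Qed.

Lemma ceil_pow_ge (r : R) : r <= ceil_pow r.
Proof.
case: (Rle_lt_dec r 0) => [r_le0 | r_gt0]; first by rewrite ceil_pow_le0.
rewrite ceil_pow_gt0E //; apply: Rnot_lt_le; rewrite Rpower_lt_iff //.
by have [] := base_Int_part (ln r / ln q); rewrite /ceil_pow_exp; lra.
Qed.

Lemma ceil_pow_lt (r : R) : 0 < r -> q * ceil_pow r < r.
Proof.
move=> r_gt0; rewrite ceil_pow_gt0E // -{1}(Rpower_1 q q_gt0) -Rpower_plus.
apply/Rpower_lt_iff => //.
by have [] := base_Int_part (ln r / ln q); rewrite /ceil_pow_exp; lra.
Qed.

Lemma ceil_pow_least (r : R) (k : Z) :
  0 < r -> r <= Rpower q (IZR k) -> ceil_pow r <= Rpower q (IZR k).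
Proof.
move=> r_gt0 r_le; rewrite ceil_pow_gt0E //; apply: Rpower_q_antimono; apply: IZR_le.
have k_le : IZR k <= ln r / ln q.
  by apply: Rnot_lt_le; rewrite -Rpower_lt_iff //; lra.
have [_ floor_gt] := base_Int_part (ln r / ln q).
suff : Z.lt k (Z.succ (ceil_pow_exp r)) by lia.
by apply: lt_IZR; rewrite succ_IZR /ceil_pow_exp; lra.
Qed.

Lemma ceil_pow_mono (a b : R) : 0 <= a -> a <= b -> ceil_pow a <= ceil_pow b.
Proof.
have b_le := ceil_pow_ge b.
move=> [a_gt0 | <-] le_ab; last by rewrite ceil_pow_le0; lra.
rewrite [ceil_pow b]ceil_pow_gt0E; last lra.
by apply: ceil_pow_least => //; rewrite -ceil_pow_gt0E; lra.
Qed.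

Lemma ceil_pow_powerRZ (r : R) : 0 < r -> ceil_pow r = powerRZ q (ceil_pow_exp r).
Proof. by move=> r_gt0; rewrite ceil_pow_gt0E // powerRZ_Rpower. Qed.

End CeilPow.

Section NonArchAbs.
Variables (K : fieldType) (a : K -> R).
Hypothesis abs_a : is_nonarch_abs a.

Lemma abs1 : a 1%R = 1.
Proof.
have a1_neq0 : a 1%R <> 0 by move/(abs_eq0 abs_a)/eqP; rewrite oner_eq0.
have := abs_mul abs_a 1%R 1%R; rewrite mulr1 => a1_sq.
by apply: (Rmult_eq_reg_l (a 1%R)) => //; lra.
Qed.

Lemma abs_exp (x : K) (n : nat) : a (x ^+ n)%R = a x ^ n.
Proof.
elim: n => [|n IHn]; first exact: abs1.
by rewrite exprS (abs_mul abs_a) IHn.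
Qed.

Lemma abs_inv (x : K) : a (x^-1)%R = / a x.
Proof.
have [-> | x_neq0] := eqVneq x 0%R.
  by rewrite invr0 (proj2 (abs_eq0 abs_a 0%R) erefl) Rinv_0.
have ax_neq0 : a x <> 0 by move/(abs_eq0 abs_a)/eqP; rewrite (negbTE x_neq0).
apply: (Rmult_eq_reg_r (a x)) => //.
by rewrite -(abs_mul abs_a) mulVf // abs1 Rinv_l.
Qed.

Lemma value_set0 : value_set a 0.
Proof. by exists 0%R; apply/(abs_eq0 abs_a). Qed.

Lemma value_set_powerRZ (r : R) (k : Z) : value_set a r -> value_set a (powerRZ r k).
Proof.
move=> [x <-]; case: k => [|p|p] /=.
- by exists 1%R; exact: abs1.
- by exists (x ^+ Pos.to_nat p)%R; exact: abs_exp.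
- by exists ((x ^+ Pos.to_nat p)^-1)%R; rewrite abs_inv abs_exp.
Qed.

(* Otherwise every ball of radius 1 would be a singleton. *)
Lemma exists_abs_in_01 : ~ discrete_top (abs_dist a) -> exists x, 0 < a x < 1.
Proof.
move=> nondiscrete; apply: NNPP => no_small; apply: nondiscrete => x _ ->.
exists 1; split=> [|y dist_lt1]; first lra.
have [dist_gt0 | dist_eq0] := abs_nonneg abs_a (x - y)%R.
  by case: no_small; exists (x - y)%R; split.
by apply/esym/subr0_eq/(abs_eq0 abs_a).
Qed.

End NonArchAbs.

Theorem lemma2p2 (L : fieldType) (absL : L -> R)
  (HL : lc_nondiscrete_nonarch_field absL)
  (X : Type) (rho : X -> X -> R) (Hrho : is_ultrametric rho) :
  exists rho' : X -> X -> R,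
    is_ultrametric rho' /\ equiv_metric rho rho' /\
    forall x y : X, value_set absL (rho' x y).
Proof.
have [abs_L [_ nondiscrete]] := HL.
have [pi [q_gt0 q_lt1]] := exists_abs_in_01 abs_L nondiscrete.
exists (fun x y => ceil_pow (absL pi) (rho x y)); split; [|split].
- apply: ultrametric_comp => //; first exact: ceil_pow_le0 (Rle_refl 0).
    by move=> r r_gt0; have := ceil_pow_ge q_gt0 q_lt1 r; lra.
  exact: ceil_pow_mono.
- apply: (equiv_metric_comp _ _ (um_nonneg Hrho) q_gt0) => r r_ge0.
  split; first exact: ceil_pow_ge.
  case: r_ge0 => [r_gt0 | <-]; first by have := ceil_pow_lt q_gt0 q_lt1 r_gt0; lra.
  by rewrite ceil_pow_le0; lra.
- move=> x y; case: (Rle_lt_dec (rho x y) 0) => [d_le0 | d_gt0].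
    by rewrite ceil_pow_le0 //; exact: value_set0.
  by rewrite ceil_pow_powerRZ //; apply: (value_set_powerRZ abs_L); exists pi.
Qed.
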